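(* Let $S$ be a simple $(l,r)$-framed algebra and $C_S=\{\alpha\in\mathbb{Z}_2^{l+r}:S_{(0,\alpha)}\neq0\}$. Then $\dim S_{(0,\alpha)}=1$ for every $\alpha\in C_S$.
   Context: Let $\mathrm{IS}=\{0,\frac12,\frac1{16}\}$ with fusion rule $\star$ (values are subsets): $0\star h=h\star0=\{h\}$, $\frac12\star\frac12=\{0\}$, $\frac12\star\frac1{16}=\frac1{16}\star\frac12=\{\frac1{16}\}$, $\frac1{16}\star\frac1{16}=\{0,\frac12\}$; $A(h_0,h_1,h_2,h_3)=\{h: h\in h_2\star h_3,\ h_0\in h_1\star h\}$. For $h\in A(h_0,h_1,h_2,h_3)$, $h'\in A(h_0,h_2,h_1,h_3)$ define $B^{h,h'}_{h_0,h_1,h_2,h_3}$: $B_{*,0,*,*}=B_{*,*,0,*}=1$; $B_{*,\frac12,\frac12,*}=-1$; $B_{a,\frac12,\frac1{16},a'}=B_{a,\frac1{16},\frac12,a'}=i$ if $a$ or $a'$ is $\frac12$, else $-i$; $B^{b,b'}_{a,\frac1{16},\frac1{16},a'}=e^{-\pi i/8}\cdot\{1$ if $a,a'\ne\frac1{16},a=a'$; $i$ if $a,a'\neq\frac1{16},a\ne a'$; $\frac{1+i}2$ if $a=a'=\frac1{16},b=b'$; $\frac{1-i}2$ if $a=a'=\frac1{16},b\neq b'\}$. $\mathrm{IS}^{(l,r)}=\mathrm{IS}^l\times\mathrm{IS}^r$, $\lambda=(h_1,..,h_l,\bar h_1,..,\bar h_r)$, $s(\lambda)=\sum h_i-\sum\bar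 h_j$; $\star$, $A$ componentwise; $B^{\lambda,\lambda'}_{\lambda^0,\dots,\lambda^3}=\prod_{i\le l}B^{h_i,h'_i}_{h^0_i,\dots,h^3_i}\prod_{j\le r}\overline{B^{\bar h_j,\bar h'_j}_{\bar h^0_j,\dots,\bar h^3_j}}$. An $(l,r)$-framed algebra: finite-dimensional $\mathrm{IS}^{(l,r)}$-graded $S=\bigoplus S_\lambda$ over $\mathbb{C}$ with bilinear product, nonzero $1\in S_0$, $a\cdot_\lambda b$ the $S_\lambda$-component of $a\cdot b$, satisfying (FA1) $S_\lambda=0$ unless $s(\lambda)\in\mathbb{Z}$; (FA2) $S_0=\mathbb{C}1$, $1$ a two-sided unit; (FA3) $S_{\lambda^1}\cdot S_{\lambda^2}\subset\bigoplus_{\lambda\in\lambda^1\star\lambda^2}S_\lambda$; (FA4) $a_2\cdot_{\lambda^0}(a_1\cdot_{\lambda'}a_3)=\sum_{\lambda\in A(\lambda^0,\lambda^1,\lambda^2,\lambda^3)}B^{\lambda,\lambda'}_{\lambda^0,\lambda^1,\lambda^2,\lambda^3}a_1\cdot_{\lambda^0}(a_2\cdot_\lambda a_3)$ for $a_i\in S_{\lambda^i}$, $\lambda'\in A(\lambda^0,\lambda^2,\lambda^1,\lambda^3)$. Ideal: graded subspace $M$ with $S\cdot M\subset M$; simple: only ideals $0$ and $S$. Identify $\mathrm{IS}$ with $\{(d,c)\in\mathbb{Z}_2^2:dc=0\}$ via $0\leftrightarrow(0,0)$, $\frac12\leftrightarrow(0,1)$, $\frac1{16}\leftrightarrow(1,0)$,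 and componentwise $\mathrm{IS}^{(l,r)}$ with pairs $(d,c)\in(\mathbb{Z}_2^{l+r})^2$, $dc=0$. *)

From HB Require Import structures.
From mathcomp Require Import all_boot all_order all_algebra.
From mathcomp Require Import complex.
From mathcomp Require Import reals.

Set Implicit Arguments.
Unset Strict Implicit.
Unset Printing Implicit Defensive.

Import Order.TTheory GRing.Theory Num.Theory.
Local Open Scope ring_scope.

Inductive IS := h0 | hhalf | h16.

Definition IS_code (h : IS) : 'I_3 :=
  match h with h0 => inord 0 | hhalf => inord 1 | h16 => inord 2 end.
Definition IS_decode (i : 'I_3) : IS :=
  match val i with 0 => h0 | 1 => hhalf | _ => h16 end.
Lemma IS_codeK : cancel IS_code IS_decode.
Proof. by case; rewrite /IS_decode /= inordK. Qed.

HB.instance Definition _ := Equality.copy IS (can_type IS_codeK).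
HB.instance Definition _ := Choice.copy IS (can_type IS_codeK).
HB.instance Definition _ := Countable.copy IS (can_type IS_codeK).
HB.instance Definition _ := Finite.copy IS (can_type IS_codeK).

Definition wt (h : IS) : rat :=
  match h with h0 => 0 | hhalf => 1 / 2 | h16 => 1 / 16 end.

(* fus a b h  <=>  h \in a * b  (the fusion rule) *)
Definition fus (a b h : IS) : bool :=
  match a, b with
  | h0, _ => h == b
  | _, h0 => h == a
  | hhalf, hhalf => h == h0
  | hhalf, h16 | h16, hhalf => h == h16
  | h16, h16 => (h == h0) || (h == hhalf)
  end.

Definition inA1 (x0 x1 x2 x3 h : IS) : bool := fus x2 x3 h && fus x1 h x0.

Section Scalars.
Variable R : realType.

Definition Ci : R[i] := Complex 0 1.

(* e^{-pi i/8} = cos(pi/8) - i sin(pi/8) *)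
Definition zeta8 : R[i] :=
  Complex (Num.sqrt (2 + Num.sqrt 2) / 2) (- (Num.sqrt (2 - Num.sqrt 2) / 2)).

(* B^{b,b'}_{a,h1,h2,a'} for a single Ising factor *)
Definition B1 (b b' a x1 x2 a' : IS) : R[i] :=
  match x1, x2 with
  | h0, _ | _, h0 => 1
  | hhalf, hhalf => -1
  | hhalf, h16 | h16, hhalf =>
      if (a == hhalf) || (a' == hhalf) then Ci else - Ci
  | h16, h16 =>
      zeta8 *
      (if (a != h16) && (a' != h16) then
         (if a == a' then 1 else Ci)
       else if (a == h16) && (a' == h16) then
         (if b == b' then (1 + Ci) / 2 else (1 - Ci) / 2)
       else 0 (* this case never occurs for b, b' in the A-sets *))
  end.
End Scalars.

Definition Lam (l r : nat) := ({ffun 'I_l -> IS} * {ffun 'I_r -> IS})%type.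

Definition lam0 (l r : nat) : Lam l r := ([ffun => h0], [ffun => h0]).

Definition sLam (l r : nat) (x : Lam l r) : rat :=
  \sum_(i < l) wt (x.1 i) - \sum_(j < r) wt (x.2 j).

Definition fusL (l r : nat) (x1 x2 x : Lam l r) : bool :=
  [forall i, fus (x1.1 i) (x2.1 i) (x.1 i)] &&
  [forall j, fus (x1.2 j) (x2.2 j) (x.2 j)].

Definition inA (l r : nat) (x0 x1 x2 x3 x : Lam l r) : bool :=
  fusL x2 x3 x && fusL x1 x x0.

Definition BL (R : realType) (l r : nat) (x x' x0 x1 x2 x3 : Lam l r) : R[i] :=
  (\prod_(i < l) B1 R (x.1 i) (x'.1 i) (x0.1 i) (x1.1 i) (x2.1 i) (x3.1 i)) *
  (\prod_(j < r) conjc (B1 R (x.2 j) (x'.2 j) (x0.2 j) (x1.2 j) (x2.2 j) (x3.2 j))).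

(* The identification Z_2^(l+r) -> IS^(l,r), alpha |-> (d,c) = (0,alpha):
   entry i is 1/2 if alpha_i = 1 and 0 otherwise. *)
Definition lam_c (l r : nat) (alpha : {ffun 'I_(l + r) -> bool}) : Lam l r :=
  ([ffun i => if alpha (lshift r i) then hhalf else h0],
   [ffun j => if alpha (rshift l j) then hhalf else h0]).

(* A finite-dimensional graded space S = (+)_lam S_lam is encoded by a *)
(* finite-dimensional C-vector space S together with a complete family *)
(* of orthogonal projections proj lam (so S_lam = limg (proj lam) and  *)
(* the S_lam-component of x is proj lam x).                            *)
Section Framed.
Variables (R : realType) (l r : nat) (S : vectType R[i]).
Variables (proj : Lam l r -> 'End(S)) (mul : S -> S -> S) (one : S).

Definition Sg (x : Lam l r) : {vspace S} := limg (proj x).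

Definition mulc (x : Lam l r) (a b : S) : S := proj x (mul a b).

Definition is_grading : Prop :=
  (\sum_(x : Lam l r) proj x = \1)%VF /\
  (forall x y : Lam l r, (proj x \o proj y)%VF = if x == y then proj x else 0).

Definition is_bilinear : Prop :=
  (forall (k : R[i]) (a b c : S), mul (k *: a + b) c = k *: mul a c + mul b c) /\
  (forall (k : R[i]) (a b c : S), mul a (k *: b + c) = k *: mul a b + mul a c).

Definition FA1 : Prop :=
  forall x : Lam l r, sLam x \isn't a Num.int -> Sg x = 0%VS.

Definition FA2 : Prop :=
  one != 0 /\ Sg (lam0 l r) = <[one]>%VS /\
  (forall a : S, mul one a = a /\ mul a one = a).

Definition FA3 : Prop :=
  forall (x1 x2 : Lam l r) (a b : S), a \in Sg x1 -> b \in Sg x2 ->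
    mul a b \in (\sum_(x : Lam l r | fusL x1 x2 x) Sg x)%VS.

Definition FA4 : Prop :=
  forall (x0 x1 x2 x3 x' : Lam l r) (a1 a2 a3 : S),
    a1 \in Sg x1 -> a2 \in Sg x2 -> a3 \in Sg x3 ->
    inA x0 x2 x1 x3 x' ->
    mulc x0 a2 (mulc x' a1 a3) =
    \sum_(x : Lam l r | inA x0 x1 x2 x3 x)
        BL R x x' x0 x1 x2 x3 *: mulc x0 a1 (mulc x a2 a3).

Definition is_framed_algebra : Prop :=
  [/\ is_grading, is_bilinear, FA1, FA2 & (FA3 /\ FA4)].

Definition is_ideal (M : {vspace S}) : Prop :=
  (M = \sum_(x : Lam l r) (M :&: Sg x))%VS /\
  (forall a m : S, m \in M -> mul a m \in M).

Definition is_simple : Prop :=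
  forall M : {vspace S}, is_ideal M -> M = 0%VS \/ M = fullv.

End Framed.

From Pilot Require Import Defs.
From HB Require Import structures.
From mathcomp Require Import all_boot all_order all_algebra.
From mathcomp Require Import complex.
From mathcomp Require Import reals.

Set Implicit Arguments.
Unset Strict Implicit.
Unset Printing Implicit Defensive.
Import Order.TTheory GRing.Theory Num.Theory.
Local Open Scope ring_scope.

(* The degree-0 part of the product, (c, m) |-> P_0 (c m) in S_0 = C 1, is a
   bilinear form.  Its radical is a graded ideal: FA4, applied twice together
   with the braiding P_x (b a) = beta P_x (a b), moves a radical element m to
   the outside of every product, where it is killed.  The radical misses 1, so
   by simplicity the form is nondegenerate.  If lam * lam = {0}, as for
   lam = (0, alpha), pick a nonzero a in S_lam and c in S_lam with
   P_0 (a c) = k 1, k <> 0; for b in S_lam, with P_0 (b c) = k' 1, FA4 on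
   (a, b, c) gives k b = B k' a, so S_lam is the line spanned by a. *)

Lemma fusC (a b h : IS) : fus a b h = fus b a h.
Proof. by case: a; case: b. Qed.

Lemma fus_h0r (a : IS) : fus a h0 a.
Proof. by case: a => /=; rewrite eqxx. Qed.

Lemma fus_h0_eq (a b : IS) : fus a b h0 -> a = b.
Proof. by case: a; case: b => //= /eqP. Qed.

Section LambdaFusion.
Variables l r : nat.
Implicit Types x y z : Lam l r.

Lemma fusLC x y z : fusL x y z = fusL y x z.
Proof. by rewrite /fusL; congr andb; apply/eq_forallb => i; rewrite fusC. Qed.

Lemma fusL_lam0r x : fusL x (lam0 l r) x.
Proof. by apply/andP; split; apply/forallP => i; rewrite ffunE fus_h0r. Qed.

Lemma fusL_lam0_eq x y : fusL x y (lam0 l r) -> x = y.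
Proof.
case: x y => [x1 x2] [y1 y2] /andP[/forallP fus1 /forallP fus2].
congr pair; apply/ffunP => i; apply: fus_h0_eq.
  by have := fus1 i; rewrite ffunE.
by have := fus2 i; rewrite ffunE.
Qed.

Lemma fusL_lam_c (alpha : {ffun 'I_(l + r) -> bool}) :
  fusL (lam_c alpha) (lam_c alpha) =1 pred1 (lam0 l r).
Proof.
move=> x /=; apply/idP/eqP => [/andP[/forallP fus1 /forallP fus2]|->].
  case: x fus1 fus2 => [x1 x2] /= fus1 fus2.
  congr pair; apply/ffunP => i; rewrite ffunE.
    by have := fus1 i; rewrite ffunE; case: (alpha _); case: (x1 i) => //= /eqP.
  by have := fus2 i; rewrite ffunE; case: (alpha _); case: (x2 i) => //= /eqP.
by apply/andP; split; apply/forallP => i; rewrite !ffunE; case: (alpha _); rewrite /= eqxx.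
Qed.

End LambdaFusion.

Section Grading.
Variables (R : realType) (l r : nat) (S : vectType R[i]).
Variable proj : Lam l r -> 'End(S).
Hypothesis grading : is_grading proj.
Implicit Types x y : Lam l r.

Lemma projK x y v : proj x (proj y v) = if x == y then proj x v else 0.
Proof.
case: grading => _ /(_ x y) /lfunP /(_ v); rewrite comp_lfunE => ->.
by case: eqP; rewrite ?zero_lfunE.
Qed.

Lemma sum_proj v : \sum_x proj x v = v.
Proof. by case: grading => /lfunP /(_ v); rewrite sum_lfunE id_lfunE. Qed.

Lemma proj_sum x I (s : seq I) (P : pred I) (F : I -> S) :
  proj x (\sum_(i <- s | P i) F i) = \sum_(i <- s | P i) proj x (F i).
Proof. exact: linear_sum. Qed.

Lemma proj_in_Sg x v : proj x v \in Sg proj x.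
Proof. exact/memv_img/memvf. Qed.

Lemma proj_Sg x v : v \in Sg proj x -> proj x v = v.
Proof. by case/memv_imgP => u _ ->; rewrite projK eqxx. Qed.

End Grading.

Section FramedAlgebra.
Variables (R : realType) (l r : nat) (S : vectType R[i]).
Variables (proj : Lam l r -> 'End(S)) (mul : S -> S -> S) (one : S).
Hypothesis grading : is_grading proj.
Hypothesis bilinear : is_bilinear mul.
Hypothesis unital : FA2 proj mul one.
Hypothesis fusion : FA3 proj mul.
Hypothesis braiding : FA4 proj mul.

Local Notation Sg := (Sg proj).
Local Notation lam0 := (lam0 l r).
Local Notation P0 := (proj lam0).
Implicit Types x y z w : Lam l r.

Lemma mul_bilinear : bilinear_for *:%R *:%R mul.
Proof.
by case: bilinear => mulPl mulPr; split=> [c k a b | a k b c]; rewrite ?mulPl ?mulPr.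
Qed.

HB.instance Definition _ := bilinear_isBilinear.Build _ _ _ _ _ _ mul mul_bilinear.

Lemma mul_onel a : mul one a = a.
Proof. by case: unital => _ [_ /(_ a)[]]. Qed.

Lemma mul_oner a : mul a one = a.
Proof. by case: unital => _ [_ /(_ a)[]]. Qed.

Lemma one_in_Sg0 : one \in Sg lam0.
Proof. by case: unital => _ [-> _]; apply: memv_line. Qed.

Lemma proj_mul_nfus x1 x2 x a b : a \in Sg x1 -> b \in Sg x2 ->
  ~~ fusL x1 x2 x -> proj x (mul a b) = 0.
Proof.
move=> a_x1 b_x2 nfus.
have /memv_sumP[v v_homog ->] := fusion a_x1 b_x2.
rewrite proj_sum big1 // => y fus_y.
rewrite -(proj_Sg grading (v_homog y fus_y)) projK //.
by case: eqP => // eq_xy; rewrite eq_xy fus_y in nfus.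
Qed.

Lemma proj0_mul_neq x y a b : a \in Sg x -> b \in Sg y -> x != y ->
  P0 (mul a b) = 0.
Proof.
move=> a_x b_y neq_xy; apply: (proj_mul_nfus a_x b_y).
by apply: contra neq_xy => /fusL_lam0_eq ->.
Qed.

Lemma proj0_mul_projl y c m : m \in Sg y -> P0 (mul c m) = P0 (mul (proj y c) m).
Proof.
move=> m_y; rewrite -{1}(sum_proj grading c) linear_sumlz proj_sum.
rewrite (bigD1 y) //= big1 ?addr0 // => w neq_wy.
exact: (proj0_mul_neq (proj_in_Sg _ _ _) m_y).
Qed.

Lemma proj0_mul_projr y c m : c \in Sg y -> P0 (mul c m) = P0 (mul c (proj y m)).
Proof.
move=> c_y; rewrite -{1}(sum_proj grading m) linear_sumr proj_sum.
rewrite (bigD1 y) //= big1 ?addr0 // => w neq_wy.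
by apply: (proj0_mul_neq c_y (proj_in_Sg _ _ _)); rewrite eq_sym.
Qed.

Lemma proj0_line v : exists k, P0 v = k *: one.
Proof. by apply/vlineP; case: unital => _ [<- _]; apply: proj_in_Sg. Qed.

Lemma proj_mul_proj_notinA x0 x1 x2 x3 x a1 a2 a3 :
  a1 \in Sg x1 -> a2 \in Sg x2 -> a3 \in Sg x3 -> ~~ inA x0 x1 x2 x3 x ->
  proj x0 (mul a1 (proj x (mul a2 a3))) = 0.
Proof.
move=> a1_x1 a2_x2 a3_x3; rewrite /inA negb_and => /orP[nfus23|nfus1].
  by rewrite (proj_mul_nfus a2_x2 a3_x3 nfus23) linear0r linear0.
exact: (proj_mul_nfus a1_x1 (proj_in_Sg _ _ _) nfus1).
Qed.

(* FA4 with a3 = 1. *)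
Lemma proj_mul_swap x1 x2 x0 a b : a \in Sg x1 -> b \in Sg x2 ->
  exists beta : R[i], proj x0 (mul b a) = beta *: proj x0 (mul a b).
Proof.
move=> a_x1 b_x2.
have [fus12|nfus12] := boolP (fusL x1 x2 x0); last first.
  by exists 0; rewrite scale0r (proj_mul_nfus b_x2 a_x1) // fusLC.
have inA_x1 : inA x0 x2 x1 lam0 x1 by rewrite /inA fusL_lam0r fusLC.
have := braiding a_x1 b_x2 one_in_Sg0 inA_x1.
rewrite /Defs.mulc mul_oner (proj_Sg grading a_x1).
rewrite (bigD1 x2) /=; last by rewrite /inA fusL_lam0r.
rewrite mul_oner (proj_Sg grading b_x2) big1 ?addr0 => [->|x /andP[_ neq_x]].
  by eexists.
by rewrite -(proj_Sg grading b_x2) projK // (negbTE neq_x) linear0r linear0 scaler0.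
Qed.

Definition pairing (m : S) : 'End(S) := (P0 \o linfun (applyr mul m))%VF.

Lemma pairingE m c : pairing m c = P0 (mul c m).
Proof. by rewrite comp_lfunE lfunE. Qed.

Lemma pairing_is_linear : linear pairing.
Proof.
move=> k u v; apply/lfunP => c.
by rewrite add_lfunE scale_lfunE !pairingE linearPr linearP.
Qed.

HB.instance Definition _ := GRing.isLinear.Build _ _ _ _ pairing pairing_is_linear.

Definition radical : {vspace S} := lker (linfun pairing).

Lemma radicalP m : reflect (forall c, P0 (mul c m) = 0) (m \in radical).
Proof.
rewrite memv_ker lfunE; apply: (iffP eqP) => [rad_m c | rad_m].
  by rewrite -pairingE rad_m zero_lfunE.
by apply/lfunP => c; rewrite pairingE rad_m zero_lfunE.
Qed.

Lemma radical_proj m w : m \in radical -> proj w m \in radical.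
Proof.
move/radicalP=> rad_m; apply/radicalP => c.
by rewrite (proj0_mul_projl c (proj_in_Sg _ _ _)) -proj0_mul_projr ?proj_in_Sg.
Qed.

Lemma proj0_radical_innerl m t c w z y x : m \in radical ->
  m \in Sg w -> t \in Sg z -> c \in Sg y -> P0 (mul t (proj x (mul m c))) = 0.
Proof.
move=> rad_m m_w t_z c_y.
have [inA_x|notA] := boolP (inA lam0 z w y x); last first.
  exact: (proj_mul_proj_notinA t_z m_w c_y notA).
rewrite [LHS](braiding m_w t_z c_y inA_x) big1 // => x' _; rewrite /Defs.mulc.
have [beta ->] := proj_mul_swap lam0 (proj_in_Sg _ x' (mul t c)) m_w.
by move/radicalP: rad_m => ->; rewrite !scaler0.
Qed.

Lemma proj0_radical_innerr m t c w z y x : m \in radical ->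
  m \in Sg w -> t \in Sg z -> c \in Sg y -> P0 (mul c (proj x (mul t m))) = 0.
Proof.
move=> rad_m m_w t_z c_y.
have [inA_x|notA] := boolP (inA lam0 y z w x); last first.
  exact: (proj_mul_proj_notinA c_y t_z m_w notA).
rewrite [LHS](braiding t_z c_y m_w inA_x) big1 // => x' _; rewrite /Defs.mulc.
have [beta ->] := proj_mul_swap x' m_w c_y.
by rewrite linearZr_LR linearZ /= (proj0_radical_innerl x' rad_m m_w t_z c_y) !scaler0.
Qed.

Lemma radical_mul t m : m \in radical -> mul t m \in radical.
Proof.
move=> rad_m; apply/radicalP => c.
rewrite -(sum_proj grading c) linear_sumlz proj_sum big1 // => y _.
rewrite -(sum_proj grading t) linear_sumlz linear_sumr proj_sum big1 // => z _.
rewrite -(sum_proj grading m) !linear_sumr proj_sum big1 // => w _.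
rewrite /= -(sum_proj grading (mul (proj z t) _)) linear_sumr proj_sum big1 // => x _ /=.
by apply: (proj0_radical_innerr _ (radical_proj w rad_m)); apply: proj_in_Sg.
Qed.

Lemma radical_is_ideal : is_ideal proj mul radical.
Proof.
split=> [|t m]; last exact: radical_mul.
apply/eqP; rewrite eqEsubv; apply/andP; split.
  apply/subvP => m rad_m; rewrite -(sum_proj grading m); apply: memv_sumr => x _.
  by rewrite memv_cap radical_proj // proj_in_Sg.
by apply/subv_sumP => x _; apply: capvSl.
Qed.

Lemma radical_eq0 : is_simple proj mul -> radical = 0%VS.
Proof.
move=> simple; case: (simple _ radical_is_ideal) => // rad_full.
have /radicalP/(_ one) : one \in radical by rewrite rad_full memvf.
rewrite mul_onel (proj_Sg grading one_in_Sg0) => one0.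
by case: unital; rewrite one0 eqxx.
Qed.

Lemma pairing_nondegenerate x a : is_simple proj mul ->
  a \in Sg x -> a != 0 -> exists2 c, c \in Sg x & P0 (mul a c) != 0.
Proof.
move=> simple a_x nz_a.
have : a \notin radical by rewrite radical_eq0 // memv0.
rewrite memv_ker lfunE => /lfunPn[c]; rewrite pairingE zero_lfunE.
rewrite (proj0_mul_projl c a_x) => nz_ca; exists (proj x c); first exact: proj_in_Sg.
have [beta swap] := proj_mul_swap lam0 a_x (proj_in_Sg _ x c).
by apply: contraNneq nz_ca; rewrite swap => ->; rewrite scaler0.
Qed.

(* FA4 for a, b, c in S_x, where x * x = {0}, reads k b = B k' a. *)
Lemma Sg_sub_line x a c : fusL x x =1 pred1 lam0 ->
  a \in Sg x -> c \in Sg x -> P0 (mul a c) != 0 -> (Sg x <= <[a]>)%VS.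
Proof.
move=> fus_xx a_x c_x nz_ac; apply/subvP => b b_x.
have [k Ek] := proj0_line (mul a c); have [k' Ek'] := proj0_line (mul b c).
have nz_k : k != 0 by apply: contraNneq nz_ac => k0; rewrite Ek k0 scale0r.
have inA_x : inA x x x x lam0 by rewrite /inA fus_xx /= eqxx fusL_lam0r.
have := braiding a_x b_x c_x inA_x; rewrite /Defs.mulc Ek.
rewrite (bigD1 lam0) //= big1 ?addr0 => [|y /andP[/andP[+ _]]]; last first.
  by rewrite fus_xx /= => /eqP ->; rewrite eqxx.
rewrite Ek' !linearZr_LR !linearZ /= !mul_oner !(proj_Sg grading) // => kb.
apply/vlineP; exists (k^-1 * k' * BL R lam0 lam0 x x x x); apply: (scalerI nz_k).
by rewrite kb !scalerA !mulrA mulfV ?mul1r.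
Qed.

Lemma dimv_Sg_eq1 x : is_simple proj mul -> fusL x x =1 pred1 lam0 ->
  Sg x != 0%VS -> \dim (Sg x) = 1%N.
Proof.
move=> simple fus_xx nz_Sg.
have nz_a : vpick (Sg x) != 0 by rewrite vpick0.
have [c c_x nz_ac] := pairing_nondegenerate simple (memv_pick _) nz_a.
have := dimvS (Sg_sub_line fus_xx (memv_pick _) c_x nz_ac).
rewrite dim_vline nz_a => le1.
by apply/eqP; rewrite eqn_leq le1 lt0n dimv_eq0.
Qed.

End FramedAlgebra.

Theorem mainTheorem7 (R : realType) (l r : nat) (S : vectType R[i])
    (proj : Lam l r -> 'End(S)) (mul : S -> S -> S) (one : S) :
  is_framed_algebra proj mul one ->
  is_simple proj mul ->
  forall alpha : {ffun 'I_(l + r) -> bool},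
    Sg proj (lam_c alpha) != 0%VS ->
    \dim (Sg proj (lam_c alpha)) = 1%N.
Proof.
case=> grading bilinear _ unit [fusion braiding] simple alpha.
exact: dimv_Sg_eq1 grading bilinear unit fusion braiding _ simple (fusL_lam_c alpha).
Qed.
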